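(* If $G=(V,E)$ is a finite connected bipartite graph and $P$ is a geodesic (shortest) path in $G$, then $P$ is $(1,1)$-guardable.
   Context: All graphs are finite, connected and reflexive (a loop at every vertex; moving along a loop means passing); loops are ignored for bipartiteness and distances. Cops and Attacking Robbers: the cop player places cops on vertices, then the robber chooses a vertex. In each round the cops move (each cop moves to an adjacent vertex or passes), then the robber moves (to an adjacent vertex or passes). A cop captures the robber by moving onto the robber's vertex. Additionally, if the robber moves onto a vertex occupied by a cop, exactly one cop on that vertex is removed from the game (''attacked''); the robber's initial placement on a cop's vertex does not count as an attack. A subgraph $H$ of $G$ is $(k,t)$-guardable if, in the Cops and Attacking Robbers game on $G$, $k+t$ cops can, in finitely many steps, move so that $k$ cops are placed on vertices of $H$ in such a way that from then on, if the robber ever moves into $H$, the cops immediately capture the robber (the $t$ extra cops are only needed to get the $k$ cops safely into position and are afterwards free). *)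

From mathcomp Require Import all_boot.
Set Implicit Arguments. Unset Strict Implicit. Unset Printing Implicit Defensive.

(* A finite graph is given by a vertex type T : finType and an adjacency
   relation adj : rel T (assumed reflexive = loops, and symmetric). *)
Section CopsAttackingRobber.
Variables (T : finType) (adj : rel T).

Definition connected_graph : Prop := forall x y : T, connect adj x y.

(* bipartite, loops ignored *)
Definition bipartite : Prop :=
  exists c : T -> bool, forall x y, adj x y -> x != y -> c x != c y.

Definition geodesic (x : T) (p : seq T) : Prop :=
  path adj x p /\
  forall q : seq T, path adj x q -> last x q = last x p -> size p <= size q.

(** The game.  Cop positions are a list of vertices (one entry per cop). *)

(* simultaneous move of all cops: each cop moves to an adjacent vertex
   (or passes along its loop) *)
Definition cop_move (C C' : seq T) : bool := all2 adj C C'.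

(* robber moves onto r: if a cop is on r, exactly one such cop is removed *)
Definition attack (C : seq T) (r : T) : seq T := rem r C.

Definition submultiset (D C : seq T) : Prop :=
  forall v, count_mem v D <= count_mem v C.

(* S is a set of positions (cops D, robber r; robber to move) from which the
   cops D alone keep H guarded: whatever the robber does, the cops D reply
   so that the robber is captured, and necessarily so if it entered H;
   otherwise the position stays in S. *)
Definition guard_invariant (H : {set T}) (S : seq T -> T -> Prop) : Prop :=
  forall D r, S D r -> forall r', adj r r' ->
    exists D', cop_move (attack D r') D' /\
               (r' \in D' \/ (r' \notin H /\ S D' r')).

Definition guards (H : {set T}) (D : seq T) (r : T) : Prop :=
  exists S, guard_invariant H S /\ S D r.

Definition guard_position (k : nat) (H : {set T}) (C : seq T) (r : T) : Prop :=
  exists D : seq T,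
    [/\ size D = k, {subset D <= H}, submultiset D C & guards H D r].

(* From position (C, r) with cops to move, the cops can force in finitely
   many rounds either capture or a guarding position. *)
Inductive cops_force (k : nat) (H : {set T}) : seq T -> T -> Prop :=
| CF_step C r C' :
    cop_move C C' ->
    (r \in C' \/ guard_position k H C' r \/
     (forall r', adj r r' -> cops_force k H (attack C' r') r')) ->
    cops_force k H C r.

(* (k,t)-guardable: k+t cops are placed, the robber then chooses any vertex
   (no attack), and the cops can force the above. *)
Definition guardable (k t : nat) (H : {set T}) : Prop :=
  exists C0 : seq T, size C0 = k + t /\ forall r0 : T, cops_force k H C0 r0.

End CopsAttackingRobber.

From mathcomp Require Import all_boot zify.

Set Implicit Arguments. Unset Strict Implicit. Unset Printing Implicit Defensive.

(* Let d be the distance from the start x of the geodesic x = v_0, ..., v_n and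
   send every vertex r to its shadow v_(min (d r) n).  Since d changes by at
   most one along an edge and d v_j = j, the shadow map is a graph homomorphism
   onto the path that fixes the path.  A cop on the robber's shadow but not
   adjacent to the robber can keep following the shadow and captures the robber
   as soon as it enters the path: by bipartiteness a vertex adjacent to its own
   shadow is farther than n from x, and then it has the same shadow as all its
   neighbours.  Such a position is reached by two cops walking together from x
   along the path towards the robber's shadow; an attack removes only one of
   them, and the other one captures. *)

Lemma last_take (T : Type) (x : T) (p : seq T) j :
  j <= size p -> last x (take j p) = nth x (x :: p) j.
Proof.
move=> le_jp; rewrite (last_nth x) size_take_min (minn_idPl le_jp).
by case: j le_jp => //= j lt_jp; rewrite nth_take.
Qed.

Section Distance.
Variables (T : finType) (adj : rel T) (x : T).
Hypothesis conn : connected_graph adj.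

Definition walk_to (m : nat) (y : T) : bool :=
  [exists q : m.-tuple T, path adj x q && (last x q == y)].

Lemma walk_toP m y :
  reflect (exists q, [/\ size q = m, path adj x q & last x q = y]) (walk_to m y).
Proof.
apply: (iffP existsP) => [[q /andP [xq /eqP qy]] | [q [qm xq qy]]].
  by exists q; rewrite size_tuple.
have qm' : size q == m by apply/eqP.
by exists (Tuple qm'); rewrite /= xq qy eqxx.
Qed.

Lemma exists_walk_to y : exists m, walk_to m y.
Proof.
have /connectP [q xq ->] := conn x y.
by exists (size q); apply/walk_toP; exists q.
Qed.

Definition dist (y : T) : nat := ex_minn (exists_walk_to y).

Lemma dist_walk y : exists q, [/\ size q = dist y, path adj x q & last x q = y].
Proof. by apply/walk_toP; rewrite /dist; case: ex_minnP. Qed.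

Lemma dist_min q : path adj x q -> dist (last x q) <= size q.
Proof.
move=> xq; rewrite /dist; case: ex_minnP => m _; apply.
by apply/walk_toP; exists q.
Qed.

Lemma dist_adj a b : adj a b -> dist b <= (dist a).+1.
Proof.
move=> ab; have [q [qa xq qa_last]] := dist_walk a.
have := @dist_min (rcons q b).
by rewrite last_rcons size_rcons qa rcons_path xq qa_last ab; apply.
Qed.

Lemma dist0 y : dist y = 0 -> y = x.
Proof. by have [[|a q] [/= <- _ <-]] := dist_walk y. Qed.

Lemma dist_pred y m : dist y = m.+1 -> exists2 a, adj a y & dist a = m.
Proof.
move=> ym; have [q [qy xq qlast]] := dist_walk y.
case/lastP: q qy xq qlast => [|q b]; first by rewrite ym.
rewrite size_rcons rcons_path last_rcons ym => -[qm] /andP [xq ab] b_y.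
subst b; exists (last x q) => //.
by have := dist_min xq; have := dist_adj ab; lia.
Qed.

Lemma dist_parity (c : T -> bool) :
  (forall a b, adj a b -> a != b -> c a != c b) ->
  forall y, c y = c x (+) odd (dist y).
Proof.
move=> c_proper y; move ym: (dist y) => m.
elim: m y ym => [|m IH] y ym; first by rewrite (dist0 ym); case: (c x).
have [a ay am] := dist_pred ym.
have a_ne_y : a != y by apply/eqP => ay_eq; move: ym; rewrite -ay_eq am; lia.
have := c_proper _ _ ay a_ne_y; rewrite (IH a am) /=.
by case: (c y); case: (c x); case: (odd m).
Qed.

Lemma bipartite_dist_adj a b :
  bipartite adj -> adj a b -> a != b -> dist a != dist b.
Proof.
move=> [c c_proper] ab a_ne_b; apply: contra (c_proper a b ab a_ne_b) => /eqP dab.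
by rewrite (dist_parity c_proper a) (dist_parity c_proper b) dab.
Qed.

Lemma geodesic_dist p : geodesic adj x p -> dist (last x p) = size p.
Proof.
move=> [xp p_min]; apply/eqP; rewrite eqn_leq dist_min //=.
by have [q [<- xq /p_min]] := dist_walk (last x p); apply.
Qed.

Lemma geodesic_take p j : geodesic adj x p -> geodesic adj x (take j p).
Proof.
move=> [xp p_min].
have /andP [xt td] : path adj x (take j p) && path adj (last x (take j p)) (drop j p).
  by rewrite -cat_path cat_take_drop.
split=> // q xq q_last.
have /p_min : path adj x (q ++ drop j p) by rewrite cat_path xq q_last.
rewrite last_cat q_last -last_cat cat_take_drop => /(_ erefl).
by rewrite -{1}(cat_take_drop j p) !size_cat leq_add2r.
Qed.

Lemma geodesic_dist_nth p j :
  geodesic adj x p -> j <= size p -> dist (nth x (x :: p) j) = j.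
Proof.
move=> xp jp; rewrite -last_take // geodesic_dist ?size_takel //.
exact: geodesic_take.
Qed.

End Distance.

Section Shadow.
Variables (T : finType) (adj : rel T).
Hypotheses (adj_refl : reflexive adj) (adj_sym : symmetric adj).
Hypotheses (conn : connected_graph adj) (bip : bipartite adj).
Variables (x : T) (p : seq T).
Hypothesis geo : geodesic adj x p.

Local Notation n := (size p).
Local Notation v j := (nth x (x :: p) j).
Local Notation d := (dist x conn).
Local Notation H := [set u in x :: p].

Definition shadow_idx (r : T) : nat := minn (d r) n.
Definition shadow (r : T) : T := v (shadow_idx r).

Lemma adj_path_succ i : i < n -> adj (v i) (v i.+1).
Proof. exact: (pathP x (proj1 geo)). Qed.

Lemma shadow_idx_le r : shadow_idx r <= n.
Proof. exact: geq_minr. Qed.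

Lemma shadow_idx_far r : n <= d r -> shadow_idx r = n.
Proof. exact: minn_idPr. Qed.

Lemma shadow_idx_adj r r' : adj r r' -> shadow_idx r' <= (shadow_idx r).+1.
Proof. by move/(dist_adj x conn); rewrite /shadow_idx; lia. Qed.

Lemma shadow_adj r r' : adj r r' -> adj (shadow r) (shadow r').
Proof.
move=> rr'; have := shadow_idx_adj rr'; rewrite adj_sym in rr'.
have := shadow_idx_adj rr'; have := shadow_idx_le r; have := shadow_idx_le r'.
rewrite /shadow; set i := shadow_idx r; set j := shadow_idx r' => le_jn le_in le_ij1 le_ji1.
have [->|[ji1|ij1]] : j = i \/ j = i.+1 \/ i = j.+1 by lia.
- exact: adj_refl.
- by rewrite ji1; apply: adj_path_succ; lia.
- by rewrite ij1 adj_sym; apply: adj_path_succ; lia.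
Qed.

Lemma shadow_mem r : shadow r \in x :: p.
Proof. by apply: mem_nth; rewrite ltnS shadow_idx_le. Qed.

Lemma shadow_id r : r \in x :: p -> shadow r = r.
Proof.
case/(nthP x) => j; rewrite ltnS => le_jn <-; rewrite /shadow /shadow_idx.
by rewrite geodesic_dist_nth // (minn_idPl le_jn).
Qed.

Lemma dist_shadow r : d (shadow r) = shadow_idx r.
Proof. exact/geodesic_dist_nth/shadow_idx_le. Qed.

Lemma adj_shadow_far r : adj r (shadow r) -> r != shadow r -> n < d r.
Proof.
move=> r_sh r_ne_sh; have := bipartite_dist_adj x conn bip r_sh r_ne_sh.
by rewrite dist_shadow /shadow_idx; lia.
Qed.

Lemma adj_shadow_idx r r' :
  adj r r' -> adj r (shadow r) -> r != shadow r -> shadow_idx r' = shadow_idx r.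
Proof.
rewrite adj_sym => /(dist_adj x conn) le_rr' r_sh r_ne_sh.
have far_r := adj_shadow_far r_sh r_ne_sh.
by rewrite !shadow_idx_far //; lia.
Qed.

Definition shadow_guarded (D : seq T) (r : T) : Prop :=
  D = [:: shadow r] /\ ~~ adj r (shadow r).

Lemma shadow_guard_invariant : guard_invariant adj H shadow_guarded.
Proof.
move=> _ r [-> r_nsh] r' rr'.
have sh_ne_r' : shadow r != r' by apply: contraNneq r_nsh => ->.
rewrite /attack /= (negbTE sh_ne_r').
have [sh_r' | sh_nr'] := boolP (adj (shadow r) r').
  by exists [:: r']; split; [rewrite /cop_move /= sh_r' | left; rewrite mem_seq1].
exists [:: shadow r']; split; first by rewrite /cop_move /= shadow_adj.
have [r'_eq | r'_ne] := eqVneq r' (shadow r'); first by left; rewrite -r'_eq inE.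
right; split; first by rewrite inE; apply: contraNN r'_ne => /shadow_id ->.
split=> //; apply: contraNN sh_nr' => r'_sh.
have sh_eq : shadow r = shadow r'.
  by rewrite /shadow (adj_shadow_idx _ r'_sh r'_ne) // adj_sym.
by rewrite sh_eq adj_sym.
Qed.

Lemma guard_position_shadow r :
  ~~ adj r (shadow r) -> guard_position adj 1 H [:: shadow r; shadow r] r.
Proof.
move=> r_nsh; exists [:: shadow r]; split=> //.
- by move=> u; rewrite mem_seq1 => /eqP ->; rewrite in_set shadow_mem.
- by move=> u /=; lia.
- by exists shadow_guarded; split; [exact: shadow_guard_invariant|].
Qed.

Lemma shadow_idx_chase i r r' :
  adj r r' -> i < shadow_idx r -> r != v i.+1 ->
  (shadow_idx r = i.+1 -> adj r (v i.+1)) -> i < shadow_idx r'.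
Proof.
move=> rr' lt_ir r_ne r_stuck; have r'r : adj r' r by rewrite adj_sym.
have [lt_ir1 | le_ri1] := ltnP i.+1 (shadow_idx r).
  by have := shadow_idx_adj r'r; lia.
have sh_r : shadow_idx r = i.+1 by apply/eqP; rewrite eqn_leq le_ri1 lt_ir.
have vi1 : v i.+1 = shadow r by rewrite /shadow sh_r.
rewrite vi1 in r_ne r_stuck.
by rewrite (adj_shadow_idx rr' (r_stuck sh_r) r_ne) sh_r.
Qed.

Lemma chase i r : i <= shadow_idx r -> cops_force adj 1 H [:: v i; v i] r.
Proof.
have [k] := ubnP (n - i); elim: k i r => // k IH i r lt_nik le_ir.
have [vi_r | vi_nr] := boolP (adj (v i) r).
  apply: (CF_step (C' := [:: r; r])); first by rewrite /cop_move /= vi_r.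
  by left; rewrite inE eqxx.
case: ltngtP le_ir => // [lt_ir | i_eq] _; last first.
  apply: (CF_step (C' := [:: v i; v i])); first by rewrite /cop_move /= adj_refl.
  have vi_sh : v i = shadow r by rewrite /shadow i_eq.
  by right; left; rewrite vi_sh; apply: guard_position_shadow; rewrite adj_sym -vi_sh.
have lt_in : i < n by apply: leq_trans lt_ir (shadow_idx_le r).
apply: (CF_step (C' := [:: v i.+1; v i.+1])).
  by rewrite /cop_move /= adj_path_succ.
have [r_eq | r_ne] := eqVneq r (v i.+1); first by left; rewrite r_eq inE eqxx.
have [[sh_r r_nadj] | r_stuck] :
    (shadow_idx r = i.+1 /\ ~~ adj r (v i.+1)) \/ (shadow_idx r = i.+1 -> adj r (v i.+1)).
  by case: (adj r (v i.+1)); case: (shadow_idx r =P i.+1); [right|right|left|right].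
  have vi1 : v i.+1 = shadow r by rewrite /shadow sh_r.
  by right; left; rewrite vi1; apply: guard_position_shadow; rewrite -vi1.
right; right => r' rr'; rewrite /attack /=.
have [r'_eq | r'_ne] := eqVneq (v i.+1) r'.
  apply: (CF_step (C' := [:: v i.+1])); first by rewrite /cop_move /= adj_refl.
  by left; rewrite r'_eq inE.
apply: (IH i.+1); first lia.
by apply: shadow_idx_chase rr' lt_ir r_ne r_stuck.
Qed.

End Shadow.

Theorem lemma4 (T : finType) (adj : rel T)
  (adj_refl : reflexive adj) (adj_sym : symmetric adj)
  (conn : connected_graph adj) (bip : bipartite adj)
  (x : T) (p : seq T) (geo : geodesic adj x p) :
  guardable adj 1 1 [set v in x :: p].
Proof.
exists [:: x; x]; split=> // r.
exact: (chase adj_refl adj_sym (conn := conn) bip geo (leq0n _)).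
Qed.
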